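(* Let $G$ be the directed graph with distinct vertices $v_1,v_2,\dots$ and $w_1,w_2,\dots$, and edges $v_i\to v_{i+1}$ and $w_i\to v_i$ for all $i\ge1$ (so each $w_i$ is parentless with lone child $v_i$), with birthdates $t(v_i)=i$ and $t(w_i)=i-\tfrac12$. Then $(G,t)$ is an infinite biosphere, and $v_1$ does not belong to any maximal element of $\mathrm{IAP}\cap\mathrm{CONV}\cap\mathrm{REF}$.
   Context: An infinite biosphere is a directed graph $G$ together with a function $t$ assigning a real number $t(v)$ to each vertex, such that: (1) if $v$ is a parent of $w$ (edge from $v$ to $w$) then $t(v)<t(w)$; (2) for every $r\in\mathbb R$ at most finitely many vertices $v$ have $t(v)<r$; (3) every vertex has finitely many children; (4) $G$ is infinite. $v$ is an ancestor of $w$ (and $w$ a descendant of $v$) if there is a directed path $v=v_1,\dots,v_n=w$ with $n>1$. $\mathrm{IAP}$: sets $S$ of vertices such that no $v\in S$ has both infinitely many descendants in $S$ and infinitely many non-descendants in $S$. $\mathrm{CONV}$: sets $S$ such that every vertex having an ancestor in $S$ and a descendant in $S$ lies in $S$. $\mathrm{REF}$: sets $S$ such that every $v\in S$ with infinitely many descendants in $G$ has infinitely many descendants in $S$. A maximal element of a family of sets is a member not properly contained in any other member. *)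

From Stdlib Require Import Reals List Relations.
Open Scope R_scope.

Definition finite_set {V : Type} (P : V -> Prop) : Prop :=
  exists l : list V, forall x, P x -> In x l.
Definition infinite_set {V : Type} (P : V -> Prop) : Prop := ~ finite_set P.

Section Biosphere.
Context {V : Type} (E : V -> V -> Prop) (t : V -> R).
(* E v w : there is an edge v -> w, i.e. v is a parent of w *)

Definition is_infinite_biosphere : Prop :=
  (forall v w, E v w -> t v < t w) /\
  (forall r : R, finite_set (fun v => t v < r)) /\
  (forall v, finite_set (fun w => E v w)) /\
  infinite_set (fun _ : V => True).

Definition ancestor : V -> V -> Prop := clos_trans V E.

Definition IAP (S : V -> Prop) : Prop :=
  forall v, S v ->
    ~ (infinite_set (fun w => S w /\ ancestor v w) /\
       infinite_set (fun w => S w /\ ~ ancestor v w)).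

Definition CONV (S : V -> Prop) : Prop :=
  forall v, (exists a, S a /\ ancestor a v) -> (exists d, S d /\ ancestor v d) -> S v.

Definition REF (S : V -> Prop) : Prop :=
  forall v, S v -> infinite_set (fun w => ancestor v w) ->
    infinite_set (fun w => S w /\ ancestor v w).

Definition IAP_CONV_REF (S : V -> Prop) : Prop := IAP S /\ CONV S /\ REF S.

Definition subset (S S' : V -> Prop) : Prop := forall x, S x -> S' x.

Definition maximal_IAP_CONV_REF (S : V -> Prop) : Prop :=
  IAP_CONV_REF S /\
  ~ (exists S', IAP_CONV_REF S' /\ subset S S' /\ ~ subset S' S).
End Biosphere.

(* The example graph. vv n stands for v_{n+1}, ww n for w_{n+1} (n : nat, 0-based). *)
Inductive Vx : Type := vv (n : nat) | ww (n : nat).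

Definition Ex (a b : Vx) : Prop :=
  match a, b with
  | vv i, vv j => j = S i
  | ww i, vv j => j = i
  | _, _ => False
  end.

Definition tx (a : Vx) : R :=
  match a with
  | vv n => INR (S n)
  | ww n => INR (S n) - / 2
  end.

From Stdlib Require Import Reals List Relations.
From Stdlib Require Import Lia Lra Classical.

(* If a member S of IAP ∩ CONV ∩ REF contains v_1, then REF gives S infinitely
   many descendants of v_1, and CONV then forces every v_j into S.  Now v_1 has
   infinitely many descendants in S, so IAP leaves S only finitely many
   non-descendants of v_1, i.e. finitely many w's; so some w_K lies outside S.
   Then S ∪ {w_K} is still in IAP ∩ CONV ∩ REF: it contains all v_j and only
   finitely many w's, so every vertex has finitely many non-descendants in it. *)

Section FiniteSets.
Context {V : Type}.

Lemma finite_set_incl (P Q : V -> Prop) :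
  (forall x, P x -> Q x) -> finite_set Q -> finite_set P.
Proof. intros HPQ [l Hl]. exists l. auto. Qed.

Lemma finite_set_or (P Q : V -> Prop) :
  finite_set P -> finite_set Q -> finite_set (fun x => P x \/ Q x).
Proof.
  intros [l Hl] [m Hm]. exists (l ++ m).
  intros x [Hx|Hx]; apply in_or_app; auto.
Qed.

Lemma finite_set_eq (y : V) : finite_set (fun x => x = y).
Proof. exists (y :: nil). intros x ->. now left. Qed.

End FiniteSets.

Lemma IAP_finite_non_descendants {V : Type} (E : V -> V -> Prop) (S : V -> Prop) (v : V) :
  IAP E S -> S v -> infinite_set (fun w => S w /\ ancestor E v w) ->
  finite_set (fun w => S w /\ ~ ancestor E v w).
Proof.
  intros HI Hv Hdesc. apply NNPP. intro Hnd. exact (HI v Hv (conj Hdesc Hnd)).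
Qed.

Definition idx (x : Vx) : nat := match x with vv n | ww n => n end.

Lemma ancestor_vv_vv (i m : nat) : (i < m)%nat -> ancestor Ex (vv i) (vv m).
Proof.
  induction 1.
  - now apply t_step.
  - apply t_trans with (vv m); [exact IHle | now apply t_step].
Qed.

Lemma ancestor_of_idx_lt (x : Vx) (m : nat) : (idx x < m)%nat -> ancestor Ex x (vv m).
Proof.
  destruct x as [i|i]; simpl; intro Him.
  - now apply ancestor_vv_vv.
  - destruct (Nat.eq_dec i m) as [<-|]; [now apply t_step|].
    apply t_trans with (vv i); [now apply t_step|].
    apply ancestor_vv_vv. lia.
Qed.

Lemma ancestor_Ex_inv (x y : Vx) : ancestor Ex x y -> exists m, y = vv m.
Proof.
  induction 1 as [a b Hab|a b c _ _ _ IH]; [|exact IH].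
  destruct a, b; simpl in Hab; try contradiction; eauto.
Qed.

Lemma not_ancestor_ww (x : Vx) (n : nat) : ~ ancestor Ex x (ww n).
Proof. intro Hanc. destruct (ancestor_Ex_inv _ _ Hanc) as [m Hm]. discriminate. Qed.

Lemma list_idx_bound (l : list Vx) : exists N, forall x, In x l -> (idx x < N)%nat.
Proof.
  induction l as [|a l [N HN]].
  - exists 0%nat. intros x [].
  - exists (Nat.max N (S (idx a))). intros x [<-|Hx]; [|specialize (HN x Hx)]; lia.
Qed.

Lemma finite_set_idx_lt (N : nat) : finite_set (fun x => (idx x < N)%nat).
Proof.
  exists (map vv (seq 0 N) ++ map ww (seq 0 N)).
  intros [n|n] Hn; apply in_or_app; [left|right]; apply in_map, in_seq; simpl in Hn; lia.
Qed.

Lemma infinite_set_of_vv_tail (P : Vx -> Prop) (N : nat) :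
  (forall n, (N <= n)%nat -> P (vv n)) -> infinite_set P.
Proof.
  intros HP [l Hl]. destruct (list_idx_bound l) as [M HM].
  specialize (HM _ (Hl _ (HP (Nat.max N M) ltac:(lia)))). simpl in HM. lia.
Qed.

Lemma ancestor_infinite (x : Vx) : infinite_set (fun w => ancestor Ex x w).
Proof.
  apply infinite_set_of_vv_tail with (S (idx x)).
  intros n Hn. apply ancestor_of_idx_lt. lia.
Qed.

Lemma Ex_tx_infinite_biosphere : is_infinite_biosphere Ex tx.
Proof.
  split; [|split; [|split]].
  - intros [i|i] [j|j] H; simpl in H; try contradiction; subst; simpl tx;
      rewrite ?(S_INR (S i)), ?S_INR; lra.
  - intros r. destruct (INR_unbounded r) as [N HN].
    apply finite_set_incl with (fun x => (idx x < N)%nat); [|apply finite_set_idx_lt].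
    intros x Hx. destruct (Nat.lt_ge_cases (idx x) N) as [|Hle]; [assumption|].
    apply le_INR in Hle. destruct x; unfold tx in Hx; simpl idx in Hle; rewrite S_INR in Hx; lra.
  - intros v.
    apply finite_set_incl with (fun x => (idx x < S (S (idx v)))%nat); [|apply finite_set_idx_lt].
    intros [j|j] H; destruct v; simpl in *; try contradiction; lia.
  - apply infinite_set_of_vv_tail with 0%nat. auto.
Qed.

Lemma CONV_REF_contains_all_vv (X : Vx -> Prop) :
  CONV Ex X -> REF Ex X -> X (vv 0) -> forall m, X (vv m).
Proof.
  intros HC HR H0 [|m]; [exact H0|]. apply NNPP. intro Hm.
  apply (HR _ H0 (ancestor_infinite _)).
  apply finite_set_incl with (fun x => (idx x < S (S m))%nat); [|apply finite_set_idx_lt].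
  intros w [Xw Aw]. destruct (ancestor_Ex_inv _ _ Aw) as [k ->]. simpl.
  destruct (Nat.lt_ge_cases k (S (S m))) as [|Hk]; [assumption|].
  exfalso. apply Hm, HC.
  - exists (vv 0). split; [exact H0|]. apply ancestor_vv_vv. lia.
  - exists (vv k). split; [exact Xw|]. apply ancestor_vv_vv. lia.
Qed.

Lemma IAP_CONV_REF_add (X : Vx -> Prop) (y : Vx) :
  (forall m, X (vv m)) -> finite_set (fun x => X x /\ ~ ancestor Ex (vv 0) x) ->
  IAP_CONV_REF Ex (fun x => X x \/ x = y).
Proof.
  intros Hall Hfin. split; [|split].
  - intros v _ [_ Hnd]. apply Hnd.
    apply finite_set_incl with
      (fun x => ((X x /\ ~ ancestor Ex (vv 0) x) \/ (idx x < S (idx v))%nat) \/ x = y).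
    + intros w [[Xw| ->] Aw]; [left|now right].
      destruct w as [m|m].
      * right. destruct (Nat.lt_ge_cases m (S (idx v))); [assumption|].
        exfalso. apply Aw, ancestor_of_idx_lt. lia.
      * left. split; [exact Xw|apply not_ancestor_ww].
    + apply finite_set_or; [apply finite_set_or|apply finite_set_eq].
      * exact Hfin.
      * apply finite_set_idx_lt.
  - intros v [a [_ Aa]] _. destruct (ancestor_Ex_inv _ _ Aa) as [m ->]. left. apply Hall.
  - intros v _ _. apply infinite_set_of_vv_tail with (S (idx v)).
    intros n Hn. split; [left; apply Hall|apply ancestor_of_idx_lt; lia].
Qed.

Theorem mainTheorem11 :
  is_infinite_biosphere Ex tx /\
  forall S : Vx -> Prop, maximal_IAP_CONV_REF Ex S -> ~ S (vv 0).
Proof.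
  split; [exact Ex_tx_infinite_biosphere|].
  intros X [[HI [HC HR]] Hmax] H0.
  pose proof (CONV_REF_contains_all_vv X HC HR H0) as Hall.
  assert (Hfin : finite_set (fun x => X x /\ ~ ancestor Ex (vv 0) x)).
  { apply (IAP_finite_non_descendants Ex X (vv 0) HI H0).
    apply infinite_set_of_vv_tail with 1%nat.
    intros n Hn. split; [apply Hall|apply ancestor_vv_vv; lia]. }
  pose proof Hfin as [L HL]. destruct (list_idx_bound L) as [N HN].
  assert (HwN : ~ X (ww N)).
  { intro Xw. specialize (HN _ (HL _ (conj Xw (not_ancestor_ww _ _)))). simpl in HN. lia. }
  apply Hmax. exists (fun x => X x \/ x = ww N).
  split; [now apply IAP_CONV_REF_add|split].
  - intros x Hx. now left.
  - intro Hsub. apply HwN, Hsub. now right.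
Qed.
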